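(* There is an absolute constant $C$ such that for all integers $m$ and all integers $n>\sqrt{|m|}$ (with $n\ge3$, so that the expression is defined), $$N_{\mathrm{root}}(4m;-n)\le C\, n(\log n)(\log\log n)^2 .$$ That is, $N_{\mathrm{root}}(4m;-n)=O(n\log n(\log\log n)^2)$ uniformly for $n>\sqrt{|m|}$, with implied constant independent of $m$.
   Context: $Q_{\mathcal D}(a,b,c,d)=2(a^2+b^2+c^2+d^2)-(a+b+c+d)^2$. For a quadruple $\mathbf v$, $|\mathbf v|$ is the sum of absolute values of its coordinates. $\mathbf S_i$ ($i=1,\dots,4$) is the integer matrix replacing the $i$-th coordinate $a_i$ of a quadruple by $2\sum_{j\ne i}a_j-a_i$, other coordinates fixed. An integer quadruple is reduced if no $\mathbf S_i$ strictly decreases $|\cdot|$; a reduced quadruple ordered as $a\le b\le c\le d$ with $a+b+c+d\ge0$ is a root quadruple if $a+b+c\ge d>0$. $N_{\mathrm{root}}(4m;-n)$ is the number of ordered integer root quadruples $(a,b,c,d)$, $a\le b\le c\le d$, with $a+b+c+d>0$, $Q_{\mathcal D}(a,b,c,d)=4m$ and $a=-n$. *)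

From Stdlib Require Import ZArith Reals List.
Open Scope Z_scope.

Record quad := Quad { q1 : Z; q2 : Z; q3 : Z; q4 : Z }.

Definition QD (v : quad) : Z :=
  let '(Quad a b c d) := v in
  2 * (a*a + b*b + c*c + d*d) - (a+b+c+d)*(a+b+c+d).

Definition qnorm (v : quad) : Z :=
  let '(Quad a b c d) := v in Z.abs a + Z.abs b + Z.abs c + Z.abs d.

Definition S1 (v : quad) : quad :=
  let '(Quad a b c d) := v in Quad (2*(b+c+d) - a) b c d.
Definition S2 (v : quad) : quad :=
  let '(Quad a b c d) := v in Quad a (2*(a+c+d) - b) c d.
Definition S3 (v : quad) : quad :=
  let '(Quad a b c d) := v in Quad a b (2*(a+b+d) - c) d.
Definition S4 (v : quad) : quad :=
  let '(Quad a b c d) := v in Quad a b c (2*(a+b+c) - d).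

Definition reduced (v : quad) : Prop :=
  qnorm v <= qnorm (S1 v) /\ qnorm v <= qnorm (S2 v) /\
  qnorm v <= qnorm (S3 v) /\ qnorm v <= qnorm (S4 v).

Definition root_quad (v : quad) : Prop :=
  let '(Quad a b c d) := v in
  reduced v /\ a <= b /\ b <= c /\ c <= d /\ 0 <= a+b+c+d /\
  d <= a+b+c /\ 0 < d.

(* The quadruples counted by N_root(4m; -n). *)
Definition counted_root (m n : Z) (v : quad) : Prop :=
  let '(Quad a b c d) := v in
  root_quad v /\ 0 < a+b+c+d /\ QD v = 4*m /\ a = -n.

(** For a root quadruple (-n, b, c, d) put x = b - n, y = c - n and 2k = b + c - n - d.
    The Descartes form gives x y = k^2 + E with E = n^2 - m > 0, while 0 <= 2k <= x <= y;
    hence x < 2n, k is a square root of -E modulo x, and (x, k) determines the quadruple.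
    Each such pair is encoded injectively by a tuple (g, a, b, q) with g^2 | 4E, g^2 a b = x
    and q < g, and a harmonic sum over a, b together with sum_(g | F) phi(F / g) = F bounds
    the number of tuples with x <= X by X log X * F / phi(F), where F = 4E.  Finally
    F / phi(F) = prod_(p | F) p / (p - 1) = O(J^2) when F < 2^(2^J): the primes up
    to 2^J are handled dyadically, since there are at most 2N / log2 N primes in (N, 2N] (they
    all divide C(2N, N) <= 4^N), and F has fewer than 2^J prime factors above 2^J. *)

From Stdlib Require Import ZArith Reals List Lia Lra.
From mathcomp Require Import ssreflect ssrfun ssrbool eqtype ssrnat seq div prime binomial bigop.
From mathcomp Require Import zify.
From mathcomp Require cyclic.

Set Implicit Arguments.
Unset Strict Implicit.

Open Scope nat_scope.

(** * Harmonic sums and the totient function *)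

Lemma sum_divn_dyadic l Y : \sum_(1 <= a < 2 ^ l) Y %/ a <= l * Y.
Proof.
elim: l => [|l IHl]; first by rewrite expn0 big_geq.
rewrite (@big_cat_nat _ _ _ (2 ^ l)) ?expn_gt0 ?leq_pexp2l //= mulSn addnC.
rewrite leq_add // (@leq_trans (\sum_(2 ^ l <= a < 2 ^ l.+1) Y %/ 2 ^ l)) //.
  rewrite !big_seq leq_sum // => a; rewrite mem_index_iota => /andP[le_la _].
  by rewrite leq_div2l ?expn_gt0.
by rewrite sum_nat_const_nat expnS mul2n -addnn addnK mulnC leq_divM.
Qed.

Lemma sum_divn_harmonic l Y : Y < 2 ^ l -> \sum_(1 <= a < Y.+1) Y %/ a <= l * Y.
Proof.
move=> ltYl; apply: leq_trans (sum_divn_dyadic l Y).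
by rewrite [X in _ <= X](@big_cat_nat _ _ _ Y.+1) //= leq_addr.
Qed.

Lemma totient_leq_mul_div F g : 0 < F -> g %| F -> totient F <= g * totient (F %/ g).
Proof.
move=> F_gt0 dvd_gF; set h := F %/ g.
have defF : F = h * g by rewrite divnK.
have h_gt0 : 0 < h by move: F_gt0; rewrite defF; lia.
have totient_size k : totient k = size [seq d <- iota 0 k | coprime k d].
  rewrite size_filter totient_count_coprime -sum1_count [RHS]big_mkcond /index_iota subn0.
  by apply: eq_bigr => d _; case: coprime.
rewrite !totient_size.
have -> : g * size [seq d <- iota 0 h | coprime h d]
        = size [seq (r, q) | r <- [seq d <- iota 0 h | coprime h d], q <- iota 0 g].
  by rewrite size_allpairs size_iota mulnC.
rewrite -(size_map (fun i => (i %% h, i %/ h))); apply: uniq_leq_size.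
  rewrite map_inj_in_uniq ?filter_uniq ?iota_uniq // => i j _ _ [eq_mod eq_div].
  by rewrite (divn_eq i h) (divn_eq j h) eq_mod eq_div.
move=> z /mapP[i]; rewrite mem_filter mem_iota => /andP[coFi /andP[_ ltiF]] ->.
apply/allpairsP; exists (i %% h, i %/ h); split => //.
  rewrite mem_filter mem_iota coprime_modr ltn_pmod //= andbT.
  by apply: coprime_dvdl coFi; rewrite defF dvdn_mulr.
by rewrite mem_iota ltn_divLR // mulnC -defF.
Qed.

Lemma sum_totient_divisors F : 0 < F -> \sum_(d <- divisors F) totient d = F.
Proof.
move=> F_gt0; rewrite -{2}(cyclic.sum_totient_dvd F) -(big_mkord (dvdn^~ F) totient).
rewrite -[RHS]big_filter; apply: perm_big.
apply: uniq_perm; rewrite ?divisors_uniq ?filter_uniq ?iota_uniq // => d.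
rewrite mem_filter mem_index_iota -dvdn_divisors //=.
by case: (boolP (d %| F)) => //= /dvdn_leq; rewrite ltnS => ->.
Qed.

Lemma sum_totient_codivisors F : 0 < F -> \sum_(g <- divisors F) totient (F %/ g) = F.
Proof.
move=> F_gt0; rewrite -[RHS](sum_totient_divisors F_gt0) -(big_map (divn F) xpredT).
apply: perm_big; apply: uniq_perm; rewrite ?divisors_uniq //.
  rewrite map_inj_in_uniq ?divisors_uniq // => g g'.
  rewrite -!dvdn_divisors // => dvd_gF dvd_g'F eq_div.
  have q_gt0 : 0 < F %/ g'.
    by rewrite divn_gt0 ?(dvdn_leq F_gt0 dvd_g'F) // (dvdn_gt0 F_gt0 dvd_g'F).
  have := divnK dvd_gF; have := divnK dvd_g'F; rewrite eq_div => defF defF'.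
  by apply/eqP; rewrite -(eqn_pmul2l q_gt0) defF defF'.
move=> d; apply/mapP/idP => [[g + ->]|]; rewrite -!dvdn_divisors // => dvd_F.
  exact: dvdn_div.
by exists (F %/ d); rewrite -?dvdn_divisors ?dvdn_div // divnA // mulKn.
Qed.

(** * A set of codes for square roots *)

Definition root_codes F X : seq (nat * (nat * (nat * nat))) :=
  [seq (g, t) | g <- [seq g <- iota 1 X | g * g %| F],
     t <- [seq (a, u) | a <- iota 1 (X %/ (g * g)),
            u <- [seq (b, q) | b <- iota 1 (X %/ (g * g * a)), q <- iota 0 g]]].

Lemma mem_root_codes F X g a b q :
  0 < g -> 0 < a -> 0 < b -> g * g * a * b <= X -> g * g %| F -> q < g ->
  (g, (a, (b, q))) \in root_codes F X.
Proof.
move=> g_gt0 a_gt0 b_gt0 le_xX dvd_gF lt_qg.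
have le_gx : g <= g * g * a * b by rewrite -!mulnA leq_pmulr ?muln_gt0 ?g_gt0 ?a_gt0.
apply/allpairsPdep; exists g, (a, (b, q)); split => //.
  by rewrite mem_filter dvd_gF mem_iota g_gt0 /=; lia.
apply/allpairsPdep; exists a, (b, q); split => //.
  by rewrite mem_iota a_gt0 /= ltnS leq_divRL ?muln_gt0 ?g_gt0 //; nia.
apply/allpairsPdep; exists b, q; split => //.
  by rewrite mem_iota b_gt0 /= ltnS leq_divRL ?muln_gt0 ?g_gt0 ?a_gt0 //; nia.
by rewrite mem_iota.
Qed.

Lemma size_root_codes_le F X l : 0 < F -> X < 2 ^ l ->
  size (root_codes F X) <= \sum_(g <- divisors F) l * (X %/ g).
Proof.
move=> F_gt0 ltXl; rewrite size_allpairs_dep sumnE big_map.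
apply: (@leq_trans (\sum_(g <- [seq g <- iota 1 X | g * g %| F]) l * (X %/ g))).
  apply: leq_sum => g _; set Y := X %/ (g * g).
  rewrite size_allpairs_dep sumnE big_map.
  have -> : \sum_(a <- iota 1 Y)
      size [seq (b, q) | b <- iota 1 (X %/ (g * g * a)), q <- iota 0 g]
      = g * \sum_(1 <= a < Y.+1) Y %/ a.
    rewrite big_distrr /index_iota subn1; apply: eq_bigr => a _.
    by rewrite size_allpairs !size_iota mulnC divnMA.
  have ltYl : Y < 2 ^ l by apply: leq_ltn_trans ltXl; rewrite leq_div.
  apply: leq_trans (_ : g * (l * Y) <= _); first by rewrite leq_mul2l sum_divn_harmonic ?orbT.
  by rewrite mulnCA leq_mul2l /Y divnMA mulnC leq_divM orbT.
apply: (uniq_sub_le_big leqnn (fun m n => leq_addr n m)).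
- by rewrite filter_uniq ?iota_uniq.
- exact: divisors_uniq.
move=> g; rewrite mem_filter -dvdn_divisors // => /andP[dvd_g2F _].
by apply: dvdn_trans dvd_g2F; apply: dvdn_mulr.
Qed.

Lemma size_root_codes F X l : 0 < F -> X < 2 ^ l ->
  size (root_codes F X) * totient F <= l * X * F.
Proof.
move=> F_gt0 ltXl.
apply: leq_trans (_ : (\sum_(g <- divisors F) l * (X %/ g)) * totient F <= _).
  by rewrite leq_mul2r size_root_codes_le ?orbT.
rewrite -{3}(sum_totient_codivisors F_gt0) big_distrr big_distrl /=.
rewrite big_seq [X in _ <= X]big_seq; apply: leq_sum => g.
rewrite -dvdn_divisors // => dvd_gF.
apply: leq_trans (_ : l * (X %/ g) * (g * totient (F %/ g)) <= _).
  by rewrite leq_mul2l totient_leq_mul_div ?orbT.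
rewrite mulnA leq_mul2r -mulnA leq_mul2l leq_divM; lia.
Qed.

(** * The ratio of F to its totient *)

Lemma totient_prod_primes F : 0 < F ->
  F * \prod_(p <- primes F) p.-1 = totient F * \prod_(p <- primes F) p.
Proof.
move=> F_gt0; rewrite totientE // {1}(prod_prime_decomp F_gt0) prime_decompE big_map.
rewrite -!big_split /= !big_seq; apply: eq_bigr => p; rewrite -logn_gt0 => logp_gt0.
by rewrite -mulnA -expnSr prednK // mulnC.
Qed.

Lemma prod_primes_leq F : 0 < F -> \prod_(p <- primes F) p <= F.
Proof.
move=> F_gt0; rewrite {2}(prod_prime_decomp F_gt0) prime_decompE big_map !big_seq.
apply: leq_prod => p; rewrite mem_primes => /and3P[p_pr _ dvd_pF].
by rewrite -{1}(expn1 p) leq_pexp2l ?(prime_gt0 p_pr) //= logn_gt0 mem_primes p_pr F_gt0.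
Qed.

Lemma prod_ratio_subseq (s t : seq nat) : uniq s -> uniq t -> {subset s <= t} ->
  (\prod_(p <- s) p) * \prod_(p <- t) p.-1 <= (\prod_(p <- t) p) * \prod_(p <- s) p.-1.
Proof.
move=> uniq_s uniq_t sub_st.
have perm_t : perm_eq t (s ++ [seq p <- t | p \notin s]).
  apply: uniq_perm => //; first rewrite cat_uniq uniq_s filter_uniq // andbT.
    by apply/hasPn => p; rewrite mem_filter => /andP[].
  move=> p; rewrite mem_cat mem_filter.
  by case: (boolP (p \in s)) => [/sub_st|] //= ->.
rewrite !(perm_big _ perm_t) !big_cat /= mulnA [X in _ <= X]mulnAC leq_mul2l.
by rewrite leq_prod ?orbT // => p _; apply: leq_pred.
Qed.

Lemma prod_ratio_gt N (s : seq nat) : all (fun p => N < p) s ->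
  (\prod_(p <- s) p) * N ^ size s <= N.+1 ^ size s * \prod_(p <- s) p.-1.
Proof.
elim: s => [|p s IHs] /=; first by rewrite !big_nil.
case/andP => ltNp /IHs le_s; rewrite !big_cons !expnS.
have le_p : p * N <= N.+1 * p.-1 by nia.
by rewrite mulnACA [X in _ <= X]mulnACA leq_mul.
Qed.

Lemma expn_size_leq_prod N (s : seq nat) : all (fun p => N < p) s ->
  N ^ size s <= \prod_(p <- s) p.
Proof.
elim: s => [|p s IHs] /=; first by rewrite big_nil.
by case/andP => ltNp /IHs le_s; rewrite big_cons expnS leq_mul // ltnW.
Qed.

Lemma bin_leq_exp2 n k : 'C(n, k) <= 2 ^ n.
Proof.
elim: n k => [|n IHn] [|k] //; first by rewrite bin0 expn_gt0.
by rewrite binS expnS mul2n -addnn leq_add.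
Qed.

Lemma prime_dvdn_bin_half p N : prime p -> N < p <= N.*2 -> p %| 'C(N.*2, N).
Proof.
move=> p_pr /andP[ltNp lep2N].
have ndvd_fact k : k < p -> ~~ (p %| k`!).
  elim: k => [|k IHk] ltkp; first by rewrite dvdn1 neq_ltn (prime_gt1 p_pr) orbT.
  by rewrite factS Euclid_dvdM // negb_or IHk ?(ltnW ltkp) // gtnNdvd.
have leN2N : N <= N.*2 by rewrite -addnn leq_addr.
have : p %| N.*2`! by rewrite dvdn_fact // prime_gt0.
rewrite -(bin_fact leN2N) -{2}addnn addnK !Euclid_dvdM //.
by rewrite (negbTE (ndvd_fact N ltNp)) !orbF.
Qed.

Lemma prod_pred_primes_gt0 (s : seq nat) : all prime s -> 0 < \prod_(p <- s) p.-1.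
Proof.
move=> /allP s_pr; rewrite big_seq prodn_cond_gt0 // => p /s_pr /prime_gt1.
by rewrite -subn1 subn_gt0.
Qed.

Definition primes_upto N := [seq p <- iota 0 N.+1 | prime p].
Definition primes_between N := [seq p <- iota N.+1 N | prime p].

Lemma primes_upto_double N : primes_upto N.*2 = primes_upto N ++ primes_between N.
Proof. by rewrite /primes_upto /primes_between -filter_cat -iotaD -addnn addSn. Qed.

Lemma prod_uniq_primes_dvdn (s : seq nat) m :
  uniq s -> all prime s -> {in s, forall p, p %| m} -> \prod_(p <- s) p %| m.
Proof.
elim: s => [|p s IHs] /=; first by rewrite big_nil dvd1n.
case/andP=> p_notin_s uniq_s /andP[p_pr s_pr] dvd_sm; rewrite big_cons Gauss_dvd.
  by rewrite dvd_sm ?mem_head // IHs // => q q_s; rewrite dvd_sm // inE q_s orbT.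
rewrite prime_coprime // Euclid_dvd_prod // big_has; apply/hasPn => q q_s.
rewrite (dvdn_prime2 p_pr (allP s_pr q q_s)).
by apply: contraNneq p_notin_s => ->.
Qed.

Lemma prod_primes_between N : \prod_(p <- primes_between N) p <= 2 ^ N.*2.
Proof.
apply: leq_trans (bin_leq_exp2 N.*2 N); apply: dvdn_leq; first by rewrite bin_gt0 -addnn leq_addr.
apply: prod_uniq_primes_dvdn; rewrite ?filter_uniq ?iota_uniq ?filter_all //.
move=> p; rewrite mem_filter mem_iota => /andP[p_pr range_p].
by apply: prime_dvdn_bin_half; rewrite // -addnn; lia.
Qed.

Lemma size_primes_between J : J * size (primes_between (2 ^ J)) <= (2 ^ J).*2.
Proof.
rewrite -(@leq_exp2l 2) // expnM.
apply: leq_trans (prod_primes_between _); apply: expn_size_leq_prod.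
by apply/allP => p; rewrite mem_filter mem_iota => /andP[_ /andP[]].
Qed.

Lemma INR_muln m n : INR (m * n) = (INR m * INR n)%R.
Proof. exact: mult_INR. Qed.

Lemma INR_expn m n : INR (m ^ n) = (INR m ^ n)%R.
Proof. by elim: n => [|n IHn] //=; rewrite expnS INR_muln IHn. Qed.

Lemma INR_leq m n : m <= n -> (INR m <= INR n)%R.
Proof. by move=> /leP; apply: le_INR. Qed.

Section RatioBounds.

Local Open Scope R_scope.

Lemma pow_1_plus_le_exp x k : 0 <= x -> (1 + x) ^ k <= exp (INR k * x).
Proof.
move=> x_ge0; elim: k => [|k IHk]; first by rewrite /= Rmult_0_l exp_0; lra.
rewrite S_INR Rmult_plus_distr_r Rmult_1_l exp_plus /= [X in _ <= X]Rmult_comm.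
by apply: Rmult_le_compat; [lra | apply: pow_le; lra | apply: exp_ineq1_le |].
Qed.

Lemma prod_ratio_gt_exp N (s : seq nat) c : (0 < N)%N -> all (fun p => N < p)%N s ->
  INR (size s) <= c * INR N ->
  INR (\prod_(p <- s) p) <= exp c * INR (\prod_(p <- s) p.-1).
Proof.
move=> N_gt0 gt_sN le_size.
have N_pos : 0 < INR N by apply: lt_0_INR; apply/ltP.
have ratio := INR_leq (prod_ratio_gt gt_sN); rewrite !INR_muln !INR_expn in ratio.
have defN1 : INR N.+1 ^ size s = INR N ^ size s * (1 + / INR N) ^ size s.
  by rewrite -Rpow_mult_distr S_INR; congr (_ ^ _); field; lra.
have le_pow : (1 + / INR N) ^ size s <= exp c.
  apply: Rle_trans (pow_1_plus_le_exp _ _) _; first exact/Rlt_le/Rinv_0_lt_compat.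
  suff : INR (size s) * / INR N <= c.
    by case=> [lt|->]; [exact/Rlt_le/exp_increasing | exact: Rle_refl].
  by apply: (Rmult_le_reg_r (INR N)) => //; rewrite Rmult_assoc Rinv_l; lra.
have Nk_pos : 0 < INR N ^ size s by exact: pow_lt.
apply: (Rmult_le_reg_r (INR N ^ size s)) => //; apply: Rle_trans ratio _.
rewrite defN1 [X in _ <= X]Rmult_comm -Rmult_assoc.
apply: Rmult_le_compat_r; first exact: pos_INR.
by apply: Rmult_le_compat_l; lra.
Qed.

Lemma sqr_exp_inv_succ_le J : 1 <= J -> J ^ 2 * exp (2 / (J + 1)) <= (J + 1) ^ 2.
Proof.
move=> J_ge1; set u := exp (/ (J + 1)).
have u_pos : 0 < u by exact: exp_pos.
have le_u : J * u <= J + 1.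
  have := exp_ineq1_le (- / (J + 1)); rewrite exp_Ropp -/u => le_inv.
  have le1 : (1 - / (J + 1)) * u <= 1.
    apply: (Rmult_le_reg_r (/ u)); first exact: Rinv_0_lt_compat.
    by rewrite Rmult_assoc Rinv_r ?Rmult_1_l ?Rmult_1_r; lra.
  have -> : J * u = (1 - / (J + 1)) * u * (J + 1) by field; lra.
  by rewrite -[X in _ <= X]Rmult_1_l; apply: Rmult_le_compat_r; lra.
have -> : 2 / (J + 1) = / (J + 1) + / (J + 1) by field; lra.
rewrite exp_plus -/u.
have -> : J ^ 2 * (u * u) = (J * u) ^ 2 by ring.
by apply: pow_incr; split; [apply: Rmult_le_pos; lra | exact: le_u].
Qed.

Lemma prod_primes_upto_exp2 J : (0 < J)%N ->
  INR (\prod_(p <- primes_upto (2 ^ J)) p) * exp (2 / INR J)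
  <= 2 * exp 2 * INR J ^ 2 * INR (\prod_(p <- primes_upto (2 ^ J)) p.-1).
Proof.
elim: J => [//|J IHJ] _; case: (posnP J) => [->|J_gt0].
  rewrite (_ : primes_upto (2 ^ 1) = [:: 2]%N) // !big_cons !big_nil /=.
  rewrite (_ : 2 / 1 = 2); [have := exp_pos 2; lra | field].
have {}IHJ := IHJ J_gt0; set N := (2 ^ J)%N.
have N_gt0 : (0 < N)%N by rewrite expn_gt0.
have J_ge1 : 1 <= INR J by apply: (le_INR 1); apply/leP.
have le_between : INR (\prod_(p <- primes_between N) p)
    <= exp (2 / INR J) * INR (\prod_(p <- primes_between N) p.-1).
  apply: (@prod_ratio_gt_exp N) => //.
    by apply/allP => p; rewrite mem_filter mem_iota => /andP[_ /andP[]].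
  have := INR_leq (size_primes_between J); rewrite INR_muln -mul2n INR_muln /= => le_size.
  apply: (Rmult_le_reg_l (INR J)); first lra.
  by have -> : INR J * (2 / INR J * INR N) = 2 * INR N by field; lra.
rewrite expnS mul2n primes_upto_double !big_cat !INR_muln S_INR.
set P := INR (\prod_(p <- primes_upto N) p); set M := INR (\prod_(p <- primes_upto N) p.-1).
set Mb := INR (\prod_(p <- primes_between N) p.-1).
set x := exp (2 / (INR J + 1)).
have [P_ge0 M_ge0 Mb_ge0 x_pos] : [/\ 0 <= P, 0 <= M, 0 <= Mb & 0 < x].
  by split; [exact: pos_INR | exact: pos_INR | exact: pos_INR | exact: exp_pos].
apply: Rle_trans (_ : P * (exp (2 / INR J) * Mb) * x <= _).
  by apply: Rmult_le_compat_r; [lra | apply: Rmult_le_compat_l].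
apply: Rle_trans (_ : 2 * exp 2 * INR J ^ 2 * M * Mb * x <= _).
  rewrite -Rmult_assoc; do 2 (apply: Rmult_le_compat_r; first lra).
  exact: IHJ.
have -> : 2 * exp 2 * INR J ^ 2 * M * Mb * x = (2 * exp 2 * M * Mb) * (INR J ^ 2 * x) by ring.
have -> : 2 * exp 2 * (INR J + 1) ^ 2 * (M * Mb) = (2 * exp 2 * M * Mb) * (INR J + 1) ^ 2 by ring.
apply: Rmult_le_compat_l; last exact: sqr_exp_inv_succ_le.
by have := exp_pos 2 => ?; repeat apply: Rmult_le_pos; lra.
Qed.

Lemma prod_ratio_small_primes J (s : seq nat) : (0 < J)%N -> uniq s ->
  {subset s <= primes_upto (2 ^ J)} ->
  INR (\prod_(p <- s) p) <= 2 * exp 2 * INR J ^ 2 * INR (\prod_(p <- s) p.-1).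
Proof.
move=> J_gt0 uniq_s sub_s; set t := primes_upto (2 ^ J).
have := INR_leq (prod_ratio_subseq uniq_s (filter_uniq _ (iota_uniq _ _)) sub_s).
rewrite !INR_muln => ratio.
have Mt_pos : 0 < INR (\prod_(p <- t) p.-1).
  by apply/lt_0_INR/ltP/prod_pred_primes_gt0; rewrite filter_all.
have le_t : INR (\prod_(p <- t) p) <= 2 * exp 2 * INR J ^ 2 * INR (\prod_(p <- t) p.-1).
  apply: Rle_trans (prod_primes_upto_exp2 J_gt0).
  rewrite -[X in X <= _]Rmult_1_r; apply: Rmult_le_compat_l; first exact: pos_INR.
  have := exp_ineq1_le (2 / INR J); suff : 0 <= 2 / INR J by lra.
  by apply: Rmult_le_pos; [lra | apply/Rlt_le/Rinv_0_lt_compat/lt_0_INR/ltP].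
apply: (Rmult_le_reg_r _ _ _ Mt_pos); apply: Rle_trans ratio _.
set K := 2 * exp 2 * INR J ^ 2.
have -> : K * INR (\prod_(p <- s) p.-1) * INR (\prod_(p <- t) p.-1)
        = K * INR (\prod_(p <- t) p.-1) * INR (\prod_(p <- s) p.-1) by ring.
by apply: Rmult_le_compat_r; [exact: pos_INR | exact: le_t].
Qed.

Lemma prod_ratio_large_primes N (s : seq nat) : (1 < N)%N -> all (fun p => N < p)%N s ->
  (\prod_(p <- s) p < 2 ^ N)%N ->
  INR (\prod_(p <- s) p) <= exp 1 * INR (\prod_(p <- s) p.-1).
Proof.
move=> N_gt1 gt_sN lt_prod; apply: (prod_ratio_gt_exp (N := N)); rewrite ?Rmult_1_l //.
  exact: ltnW.
have : (2 ^ size s < 2 ^ N)%N.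
  apply: leq_ltn_trans lt_prod; apply: leq_trans (expn_size_leq_prod gt_sN).
  by case: (size s) => [|k]; [rewrite !expn0 | rewrite leq_exp2r].
by rewrite ltn_exp2l // => /ltnW; apply: INR_leq.
Qed.

Lemma prod_ratio_primes F J : (0 < F)%N -> (0 < J)%N -> (F < 2 ^ 2 ^ J)%N ->
  INR (\prod_(p <- primes F) p)
  <= 2 * exp 2 * exp 1 * INR J ^ 2 * INR (\prod_(p <- primes F) p.-1).
Proof.
move=> F_gt0 J_gt0 lt_F; set N := (2 ^ J)%N.
set small := [seq p <- primes F | (p <= N)%N]; set large := [seq p <- primes F | ~~ (p <= N)%N].
have split_prod f : \prod_(p <- primes F) f p = (\prod_(p <- small) f p * \prod_(p <- large) f p)%N.
  by rewrite (bigID (fun p => p <= N)%N) /= !big_filter.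
have le_small : INR (\prod_(p <- small) p) <= 2 * exp 2 * INR J ^ 2 * INR (\prod_(p <- small) p.-1).
  apply: prod_ratio_small_primes; rewrite ?filter_uniq ?primes_uniq // => p.
  by rewrite !mem_filter mem_iota ltnS mem_primes => /andP[-> /andP[-> _]].
have le_large : INR (\prod_(p <- large) p) <= exp 1 * INR (\prod_(p <- large) p.-1).
  apply: (prod_ratio_large_primes (N := N)).
  - by apply: leq_trans (ltn_expl _ (ltnSn 1)); rewrite ltnS.
  - by apply/allP => p; rewrite mem_filter ltnNge => /andP[].
  apply: leq_ltn_trans lt_F; apply: leq_trans (prod_primes_leq F_gt0).
  rewrite split_prod leq_pmull // big_seq prodn_cond_gt0 // => p.
  by rewrite mem_filter mem_primes => /andP[_ /and3P[/prime_gt0]].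
rewrite !split_prod !INR_muln.
have -> : 2 * exp 2 * exp 1 * INR J ^ 2
            * (INR (\prod_(p <- small) p.-1) * INR (\prod_(p <- large) p.-1))
    = (2 * exp 2 * INR J ^ 2 * INR (\prod_(p <- small) p.-1))
      * (exp 1 * INR (\prod_(p <- large) p.-1)) by ring.
by apply: Rmult_le_compat => //; exact: pos_INR.
Qed.

Lemma totient_lower_bound F J : (0 < F)%N -> (0 < J)%N -> (F < 2 ^ 2 ^ J)%N ->
  INR F <= 2 * exp 2 * exp 1 * INR J ^ 2 * INR (totient F).
Proof.
move=> F_gt0 J_gt0 lt_F.
have := f_equal INR (totient_prod_primes F_gt0); rewrite !INR_muln => defF.
have M_pos : 0 < INR (\prod_(p <- primes F) p.-1).
  exact/lt_0_INR/ltP/prod_pred_primes_gt0/all_prime_primes.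
apply: (Rmult_le_reg_r _ _ _ M_pos); rewrite defF.
have -> : 2 * exp 2 * exp 1 * INR J ^ 2 * INR (totient F) * INR (\prod_(p <- primes F) p.-1)
    = INR (totient F) * (2 * exp 2 * exp 1 * INR J ^ 2 * INR (\prod_(p <- primes F) p.-1)) by ring.
by apply: Rmult_le_compat_l; [exact: pos_INR | exact: prod_ratio_primes].
Qed.

End RatioBounds.

(** * Square roots of -E modulo x *)

Definition distn (a b : nat) := (a - b) + (b - a).

Lemma distnC a b : distn a b = distn b a.
Proof. by rewrite /distn addnC. Qed.

Lemma dvdn_distn d a b : (d %| distn a b) = (a == b %[mod d]).
Proof.
rewrite /distn; case: (leqP b a) => [le_ba|/ltnW le_ab].
  by rewrite (eqn_mod_dvd _ le_ba) (_ : b - a = 0) ?addn0 //; apply/eqP; rewrite subn_eq0.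
by rewrite eq_sym (eqn_mod_dvd _ le_ab) (_ : a - b = 0) //; apply/eqP; rewrite subn_eq0.
Qed.

Lemma dvdn_div_gcd_mul x u v : 0 < x -> x %| u * v -> x %/ gcdn x u %| v.
Proof.
move=> x_gt0 dvd_x; have d_gt0 : 0 < gcdn x u by rewrite gcdn_gt0 x_gt0.
have [e defx] := dvdnP (dvdn_gcdl x u); have [u' defu] := dvdnP (dvdn_gcdr x u).
have co_eu' : coprime e u'.
  by rewrite /coprime -(eqn_pmul2r d_gt0) mul1n muln_gcdl -defx -defu.
rewrite {1}defx mulnK // -(Gauss_dvdr v co_eu') -(dvdn_pmul2r d_gt0) -defx.
by rewrite mulnAC -defu.
Qed.

Lemma dvdn_add_sqrt_mod E x k k0 : 0 < x -> x %| k ^ 2 + E -> x %| k0 ^ 2 + E ->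
  x %/ gcdn x (distn k k0) %| k + k0.
Proof.
move=> x_gt0; wlog le_k0k : k k0 / k0 <= k.
  move=> W dvd_k dvd_k0; case: (leqP k0 k) => [|/ltnW] cmp; first exact: W.
  by rewrite distnC addnC; apply: W.
move=> dvd_k dvd_k0; apply: dvdn_div_gcd_mul => //.
rewrite (_ : distn k k0 = k - k0) -?subn_sqr; last by rewrite /distn; lia.
by rewrite (_ : k ^ 2 - k0 ^ 2 = (k ^ 2 + E) - (k0 ^ 2 + E)) ?dvdn_sub //; lia.
Qed.

Section SqrtMod.

Variable E : nat.

Definition is_sqrt_mod (p : nat * nat) := [&& 0 < p.1, p.2 < p.1 & p.1 %| p.2 ^ 2 + E].

Definition least_sqrt_mod x := head 0 [seq j <- iota 0 x | x %| j ^ 2 + E].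

Lemma least_sqrt_modP x k : is_sqrt_mod (x, k) ->
  least_sqrt_mod x < x /\ x %| least_sqrt_mod x ^ 2 + E.
Proof.
case/and3P=> /= _ lt_kx dvd_k; rewrite /least_sqrt_mod.
set s := [seq j <- iota 0 x | x %| j ^ 2 + E].
have : k \in s by rewrite mem_filter dvd_k mem_iota.
case def_s: s => [|j t] //= _; have : j \in s by rewrite def_s mem_head.
by rewrite mem_filter mem_iota => /andP[-> /andP[_ ->]].
Qed.

Definition sqrt_d x k := gcdn x (distn k (least_sqrt_mod x)).
Definition sqrt_e x k := x %/ sqrt_d x k.
Definition sqrt_g x k := gcdn (sqrt_d x k) (sqrt_e x k).

(* If k0 is the least root, d divides k - k0 and e = x / d divides k + k0
   (dvdn_add_sqrt_mod), so k is determined modulo lcm(d, e) = x / g. *)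
Definition sqrt_code (p : nat * nat) :=
  let x := p.1 in let k := p.2 in
  (sqrt_g x k, (sqrt_d x k %/ sqrt_g x k, (sqrt_e x k %/ sqrt_g x k, k %/ (x %/ sqrt_g x k)))).

Lemma sqrt_deP x k : is_sqrt_mod (x, k) ->
  [/\ 0 < sqrt_d x k, x = sqrt_d x k * sqrt_e x k,
      sqrt_d x k %| distn k (least_sqrt_mod x) & sqrt_e x k %| k + least_sqrt_mod x].
Proof.
move=> root_k; have [_ dvd_k0] := least_sqrt_modP root_k.
case/and3P: root_k => /= x_gt0 _ dvd_k.
have d_gt0 : 0 < sqrt_d x k by rewrite gcdn_gt0 x_gt0.
split; rewrite ?dvdn_gcdr //; first by rewrite /sqrt_e mulnC divnK // dvdn_gcdl.
exact: (dvdn_add_sqrt_mod x_gt0 dvd_k dvd_k0).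
Qed.

Lemma sqrt_g_sqr_dvdn x k : is_sqrt_mod (x, k) -> sqrt_g x k * sqrt_g x k %| 4 * E.
Proof.
move=> root_k; have [_ defx dvd_d dvd_e] := sqrt_deP root_k.
have [_ dvd_k0] := least_sqrt_modP root_k.
move: dvd_d dvd_e dvd_k0; set k0 := least_sqrt_mod x; set g := sqrt_g x k => dvd_d dvd_e dvd_k0.
have dvd_gsum : g %| k + k0 := dvdn_trans (dvdn_gcdr _ _) dvd_e.
have dvd_gdist : g %| distn k k0 := dvdn_trans (dvdn_gcdl _ _) dvd_d.
have dvd_g2k0 : g %| 2 * k0.
  move: dvd_gdist; rewrite /distn; case: (leqP k0 k) => cmp dvd_gdist.
    rewrite (_ : 2 * k0 = (k + k0) - (k - k0 + (k0 - k))); first exact: dvdn_sub.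
    by clear -cmp; lia.
  rewrite (_ : 2 * k0 = (k + k0) + (k - k0 + (k0 - k))); first exact: dvdn_add.
  by clear -cmp; lia.
have dvd_g2x : g * g %| x by rewrite defx dvdn_mul ?dvdn_gcdl ?dvdn_gcdr.
have : g * g %| 4 * (k0 ^ 2 + E) by apply/dvdn_mull/(dvdn_trans dvd_g2x).
rewrite mulnDr dvdn_addr // (_ : 4 * k0 ^ 2 = 2 * k0 * (2 * k0)); first exact: dvdn_mul.
by clear; lia.
Qed.

Lemma sqrt_code_in x k X : is_sqrt_mod (x, k) -> x <= X ->
  sqrt_code (x, k) \in root_codes (4 * E) X.
Proof.
move=> root_k le_xX; have x_gt0 : 0 < x by case/andP: root_k.
have lt_kx : k < x by case/and3P: root_k.
rewrite /sqrt_code /=; move: (sqrt_deP root_k) (sqrt_g_sqr_dvdn root_k); rewrite /sqrt_g.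
move: (sqrt_d x k) (sqrt_e x k) => d e [_ defx _ _].
move: (gcdn d e) (dvdn_gcdl d e) (dvdn_gcdr d e) => g /dvdnP[a defd] /dvdnP[b defe] dvd_g2E.
subst d e.
have := x_gt0; rewrite {1}defx !muln_gt0 => /andP[/andP[a_gt0 g_gt0] /andP[b_gt0 _]].
have defx' : x = g * g * a * b by rewrite defx mulnACA mulnC mulnA.
have defxg : x %/ g = g * a * b by rewrite defx' -!mulnA mulKn.
rewrite !mulnK //; apply: mem_root_codes; rewrite -?defx' // defxg.
by rewrite ltn_divLR ?muln_gt0 ?g_gt0 ?a_gt0 // !mulnA -defx'.
Qed.

Lemma sqrt_code_inj : {in is_sqrt_mod &, injective sqrt_code}.
Proof.
move=> [x k] [x' k'] root_k root_k'.
have [_ defx dvd_d dvd_e] := sqrt_deP root_k.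
have [_ defx' dvd_d' dvd_e'] := sqrt_deP root_k'.
rewrite /sqrt_code /= => -[eq_g eq_d eq_e eq_q].
have defd y j : sqrt_d y j = sqrt_d y j %/ sqrt_g y j * sqrt_g y j.
  by rewrite divnK // dvdn_gcdl.
have defe y j : sqrt_e y j = sqrt_e y j %/ sqrt_g y j * sqrt_g y j.
  by rewrite divnK // dvdn_gcdr.
have eq_d' : sqrt_d x k = sqrt_d x' k' by rewrite defd [RHS]defd eq_d eq_g.
have eq_e' : sqrt_e x k = sqrt_e x' k' by rewrite defe [RHS]defe eq_e eq_g.
have eq_x : x = x' by rewrite defx defx' eq_d' eq_e'.
subst x'; rewrite -eq_d' in dvd_d'; rewrite -eq_e' in dvd_e'.
have dvd_lcm : x %/ sqrt_g x k %| distn k k'.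
  rewrite {1}defx -/(lcmn _ _) dvdn_lcm !dvdn_distn; apply/andP; split.
    by move: dvd_d dvd_d'; rewrite !dvdn_distn => /eqP-> /eqP->.
  by rewrite -(eqn_modDr (least_sqrt_mod x)); move: dvd_e dvd_e'; rewrite /dvdn => /eqP-> /eqP->.
rewrite -eq_g in eq_q; move: dvd_lcm; rewrite dvdn_distn => /eqP eq_mod.
by rewrite (divn_eq k (x %/ sqrt_g x k)) (divn_eq k' (x %/ sqrt_g x k)) eq_q eq_mod.
Qed.

Lemma count_sqrt_mod L X l : 0 < E -> uniq L -> all is_sqrt_mod L ->
  all (fun p => p.1 <= X) L -> X < 2 ^ l -> size L * totient (4 * E) <= l * X * (4 * E).
Proof.
move=> E_gt0 uniq_L root_L le_LX lt_Xl.
apply: leq_trans (size_root_codes _ lt_Xl); last by rewrite muln_gt0.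
rewrite leq_mul2r -(size_map sqrt_code) uniq_leq_size ?orbT //.
  by rewrite map_inj_in_uniq // => p q p_L q_L; apply: sqrt_code_inj; apply: (allP root_L).
move=> _ /mapP[[x k] p_L ->]; apply: sqrt_code_in; first exact: (allP root_L).
exact: (allP le_LX _ p_L).
Qed.

End SqrtMod.

Lemma count_sqrt_mod_le E L X l J : 0 < E -> uniq L -> all (is_sqrt_mod E) L ->
  all (fun p => p.1 <= X) L -> X < 2 ^ l -> 0 < J -> 4 * E < 2 ^ 2 ^ J ->
  (INR (size L) <= INR l * INR X * (2 * exp 2 * exp 1 * INR J ^ 2))%R.
Proof.
move=> E_gt0 uniq_L root_L le_LX lt_Xl J_gt0 lt_EJ.
have F_gt0 : 0 < 4 * E by rewrite muln_gt0.
have := INR_leq (count_sqrt_mod E_gt0 uniq_L root_L le_LX lt_Xl).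
rewrite !INR_muln -[(INR 4 * _)%R]INR_muln => le_count.
have le_F := totient_lower_bound F_gt0 J_gt0 lt_EJ.
have phi_pos : (0 < INR (totient (4 * E)))%R by apply/lt_0_INR/ltP; rewrite totient_gt0.
apply: (Rmult_le_reg_r _ _ _ phi_pos); apply: Rle_trans le_count _.
rewrite [X in (_ <= X)%R]Rmult_assoc; apply: Rmult_le_compat_l => //.
by apply: Rmult_le_pos; apply: pos_INR.
Qed.

(** * Root quadruples with a = -n *)

Lemma counted_root_sqrt_mod m n a b c d :
  (Z.abs m < n * n)%Z -> counted_root m n (Quad a b c d) ->
  let k := ((b + c - n - d) / 2)%Z in
  [/\ (0 <= k)%Z, (2 * k <= b - n)%Z, (0 < b - n <= c - n)%Z, (2 * k = b + c - n - d)%Z &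
      ((b - n) * (c - n) = k * k + (n * n - m))%Z].
Proof.
move=> lt_m [[_ [_ [le_bc [le_cd [_ [le_d _]]]]]] [_ [defQ def_a]]] k; subst a.
change (2 * (- n * - n + b * b + c * c + d * d) - (- n + b + c + d) * (- n + b + c + d)
        = 4 * m)%Z in defQ.
have key : (4 * ((b - n) * (c - n)) = (b + c - n - d) ^ 2 + 4 * (n * n - m))%Z by nia.
have even_t : (b + c - n - d = 2 * k)%Z.
  have := Z.div_mod (b + c - n - d) 2 ltac:(lia).
  have := Z.mod_pos_bound (b + c - n - d) 2 ltac:(lia).
  rewrite -/k; set r := Z.modulo _ 2 => r_bounds def_t.
  have [r0|r1] : r = 0%Z \/ r = 1%Z by lia.
    by rewrite def_t r0; lia.
  rewrite def_t r1 in key.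
  have : (4 * ((b - n) * (c - n) - k * k - k - n * n + m) = 1)%Z by nia.
  lia.
have key' : ((b - n) * (c - n) = k * k + (n * n - m))%Z by nia.
have x_gt0 : (0 < b - n)%Z.
  apply/Z.nle_gt => x_le0; have x0 : (b - n = 0)%Z by lia.
  by rewrite x0 in key'; nia.
by split; lia.
Qed.

Definition quad_sqrt (n : Z) (v : quad) : nat * nat :=
  (Z.to_nat (q2 v - n), Z.to_nat ((q2 v + q3 v - n - q4 v) / 2)).

Lemma quad_sqrt_is_sqrt m n v : (0 < n)%Z -> counted_root m n v -> (Z.abs m < n * n)%Z ->
  is_sqrt_mod (Z.to_nat (n * n - m)) (quad_sqrt n v) /\ ((quad_sqrt n v).1 <= 2 * Z.to_nat n)%N.
Proof.
move=> n_gt0; case: v => a b c d root_v lt_m; rewrite /quad_sqrt /=.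
have [k_ge0 le_kx x_bounds _] := counted_root_sqrt_mod lt_m root_v.
set k := ((b + c - n - d) / 2)%Z in k_ge0 le_kx * => key.
have x_lt : (b - n < 2 * n)%Z.
  have : ((b - n) * (b - n) <= (b - n) * (c - n))%Z by nia.
  have : (4 * (k * k) <= (b - n) * (b - n))%Z by nia.
  nia.
split; last by lia.
apply/and3P; split => /=; try lia.
apply/dvdnP; exists (Z.to_nat (c - n)); apply: Nat2Z.inj.
by rewrite Nat2Z.inj_add !Nat2Z.inj_mul !Z2Nat.id; lia.
Qed.

Lemma quad_sqrt_inj m n u v : (Z.abs m < n * n)%Z ->
  counted_root m n u -> counted_root m n v -> quad_sqrt n u = quad_sqrt n v -> u = v.
Proof.
move=> lt_m; case: u v => a b c d [a' b' c' d'] root_u root_v.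
have [k_ge0 _ x_bounds def_k key] := counted_root_sqrt_mod lt_m root_u.
have [k_ge0' _ x_bounds' def_k' key'] := counted_root_sqrt_mod lt_m root_v.
have [-> ->] : a = (- n)%Z /\ a' = (- n)%Z.
  by case: root_u => _ [_ [_ ->]]; case: root_v => _ [_ [_ ->]].
rewrite /quad_sqrt /= => -[eq_x eq_k].
have {}eq_x := Z2Nat.inj (b - n) (b' - n) ltac:(lia) ltac:(lia) eq_x.
have {}eq_k := Z2Nat.inj _ _ k_ge0 k_ge0' eq_k.
have eq_b : b' = b by lia.
subst b'; rewrite -eq_k in def_k' key'.
have eq_c : c' = c by nia.
have eq_d : d' = d by lia.
by subst.
Qed.

Lemma size_length (T : Type) (s : seq T) : size s = length s.
Proof. by elim: s => //= x s ->. Qed.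

Lemma mem_map_In (T : Type) (U : eqType) (f : T -> U) s y :
  y \in map f s -> exists2 x, In x s & y = f x.
Proof.
elim: s => [|x s IHs] //=; rewrite inE => /orP[/eqP ->|/IHs[z z_s ->]].
  by exists x; first left.
by exists z; first right.
Qed.

Lemma uniq_map_NoDup (T : Type) (U : eqType) (f : T -> U) (s : list T) : NoDup s ->
  (forall x y, In x s -> In y s -> f x = f y -> x = y) -> uniq (map f s).
Proof.
elim: s => [|x s IHs] //= /NoDup_cons_iff[x_notin_s nodup_s] inj_f.
apply/andP; split; last by apply: IHs => // y z y_s z_s; apply: inj_f; right.
apply/negP => /mem_map_In[y y_s eq_f].
have eq_xy : x = y by apply: inj_f => //; [left | right].
by apply: x_notin_s; rewrite eq_xy.
Qed.

Lemma count_counted_roots m n (s : list quad) l J :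
  (0 < n)%Z -> (Z.abs m < n * n)%Z -> NoDup s -> (forall v, In v s -> counted_root m n v) ->
  (2 * Z.to_nat n < 2 ^ l)%N -> (0 < J)%N -> (4 * Z.to_nat (n * n - m) < 2 ^ 2 ^ J)%N ->
  (INR (length s) <= INR l * INR (2 * Z.to_nat n) * (2 * exp 2 * exp 1 * INR J ^ 2))%R.
Proof.
move=> n_gt0 lt_m nodup_s root_s lt_Xl J_gt0 lt_FJ.
have sqrt_v v : In v s -> is_sqrt_mod (Z.to_nat (n * n - m)) (quad_sqrt n v) /\
                          ((quad_sqrt n v).1 <= 2 * Z.to_nat n)%N.
  by move=> v_s; apply: quad_sqrt_is_sqrt => //; apply: root_s.
rewrite -size_length -(size_map (quad_sqrt n)).
apply: (count_sqrt_mod_le (E := Z.to_nat (n * n - m))) => //; first lia.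
- by apply: uniq_map_NoDup => // u v u_s v_s; apply: quad_sqrt_inj; auto.
- by apply/allP => p /mem_map_In[v /sqrt_v[]] + _ ->.
by apply/allP => p /mem_map_In[v /sqrt_v[]] _ + ->.
Qed.

Open Scope R_scope.

(** * Logarithmic estimates *)

Lemma ln_le x y : 0 < x -> x <= y -> ln x <= ln y.
Proof. by move=> x_pos [lt_xy|->]; [left; apply: ln_increasing | right]. Qed.

Lemma exp_INR_mul k x : exp (INR k * x) = exp x ^ k.
Proof.
elim: k => [|k IHk]; first by rewrite Rmult_0_l exp_0.
by rewrite S_INR Rmult_plus_distr_r Rmult_1_l exp_plus IHk /= Rmult_comm.
Qed.

Lemma exp1_lt_3 : exp 1 < 3.
Proof.
have le_exp8 : exp (/ 8) <= 8 / 7.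
  have := exp_ineq1_le (- / 8); rewrite exp_Ropp => le_inv.
  have e_pos := exp_pos (/ 8).
  apply: (Rmult_le_reg_r (/ exp (/ 8))); first exact: Rinv_0_lt_compat.
  by rewrite Rinv_r; [lra | apply: Rgt_not_eq].
have -> : exp 1 = exp (/ 8) ^ 8 by rewrite -exp_INR_mul; congr exp; simpl; field.
apply: Rle_lt_trans (pow_incr _ _ 8 _) _; first by split; [exact/Rlt_le/exp_pos | exact: le_exp8].
simpl; lra.
Qed.

Lemma ln3_gt1 : 1 < ln 3.
Proof.
by rewrite -[X in X < _](ln_exp 1); apply: ln_increasing; [exact: exp_pos | exact: exp1_lt_3].
Qed.

Lemma ln2_lt1 : ln 2 < 1.
Proof.
rewrite -[X in _ < X](ln_exp 1); apply: ln_increasing; first lra.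
by have := exp_ineq1 1 ltac:(lra); lra.
Qed.

Lemma trunc_log2_le_ln (y : nat) : (0 < y)%N -> INR (trunc_log 2 y) <= 2 * ln (INR y).
Proof.
move=> y_gt0.
have le_pow : 2 ^ trunc_log 2 y <= INR y.
  have := INR_leq (trunc_logP (isT : (1 < 2)%N) y_gt0).
  by rewrite INR_expn (_ : INR 2 = 2) //; simpl; lra.
have := ln_le (pow_lt 2 _ ltac:(lra)) le_pow; rewrite ln_pow; last lra.
by have := ln_lt_2; have := pos_INR (trunc_log 2 y); nra.
Qed.

Lemma ln_exp2_le k : ln (2 ^ k) <= INR k.
Proof. by rewrite ln_pow; [have := ln2_lt1; have := pos_INR k; nra | lra]. Qed.

Lemma trunc_log2S_le_ln N (X : nat) : 3 <= N -> INR X = 2 * N -> INR (trunc_log 2 X).+1 <= 5 * ln N.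
Proof.
move=> N_ge3 X_eq; have X_gt0 : (0 < X)%N by apply/ltP; apply: (INR_lt 0); simpl; lra.
have := trunc_log2_le_ln X_gt0; rewrite S_INR X_eq ln_mult; try lra.
by have := ln2_lt1; have := ln3_gt1; have := ln_le (x := 3) ltac:(lra) N_ge3; lra.
Qed.

Lemma trunc_log2S_iter_le_lnln N (F : nat) : 3 <= N -> (0 < F)%N -> INR F <= 2 ^ 3 * (N * N) ->
  INR (trunc_log 2 (trunc_log 2 F).+1).+1 <= (9 / ln (ln 3) + 2) * ln (ln N).
Proof.
move=> N_ge3 F_gt0 F_le.
have lnN_gt1 : 1 < ln N := Rlt_le_trans _ _ _ ln3_gt1 (ln_le (x := 3) ltac:(lra) N_ge3).
have u_le : INR (trunc_log 2 F).+1 <= 11 * ln N.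
  have := trunc_log2_le_ln F_gt0; have := ln_le (lt_0_INR _ (ltP F_gt0)) F_le.
  rewrite !ln_mult; try (simpl; nra).
  by rewrite ln_1 S_INR; have := ln2_lt1; lra.
have J_le : INR (trunc_log 2 (trunc_log 2 F).+1).+1 <= 9 + 2 * ln (ln N).
  have := trunc_log2_le_ln (ltn0Sn (trunc_log 2 F)).
  have := ln_le (lt_0_INR _ (ltP (ltn0Sn (trunc_log 2 F)))) u_le.
  have ln11 : ln 11 <= 4.
    have := ln_le (x := 11) (y := 2 ^ 4) ltac:(lra) ltac:(simpl; lra).
    by have := ln_exp2_le 4; rewrite !S_INR /=; lra.
  by rewrite ln_mult ?S_INR; [lra | lra | lra].
have c_pos : 0 < ln (ln 3) by rewrite -ln_1; apply: ln_increasing; [lra | exact: ln3_gt1].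
have c_le : ln (ln 3) <= ln (ln N).
  by apply: ln_le; [have := ln3_gt1; lra | apply: ln_le; lra].
apply: Rle_trans J_le _; rewrite Rmult_plus_distr_r; apply: Rplus_le_compat_r.
have -> : 9 / ln (ln 3) * ln (ln N) = 9 * (ln (ln N) / ln (ln 3)) by field; lra.
suff : 1 <= ln (ln N) / ln (ln 3) by lra.
by apply: (Rmult_le_reg_r _ _ _ c_pos); rewrite /Rdiv Rmult_assoc Rinv_l; lra.
Qed.

Lemma lt_exp2_exp2_trunc_log F : (F < 2 ^ 2 ^ (trunc_log 2 (trunc_log 2 F).+1).+1)%N.
Proof.
apply: leq_trans (trunc_log_ltn F (isT : (1 < 2)%N)) _.
by rewrite leq_exp2l // ltnW // trunc_log_ltn.
Qed.

Lemma abs_lt_sqr_of_sqrt_lt m n : (0 <= n)%Z -> sqrt (IZR (Z.abs m)) < IZR n ->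
  (Z.abs m < n * n)%Z.
Proof.
move=> n_ge0 lt_sqrt; apply: lt_IZR; rewrite mult_IZR; apply: sqrt_lt_0_alt.
by rewrite sqrt_square //; apply: IZR_le.
Qed.

Theorem theorem4p2 :
  exists C : R, forall m n : Z, (3 <= n)%Z -> sqrt (IZR (Z.abs m)) < IZR n ->
    forall s : list quad, NoDup s -> (forall v, In v s -> counted_root m n v) ->
      INR (length s) <= C * IZR n * ln (IZR n) * (ln (ln (IZR n)))^2.
Proof.
exists (10 * (2 * exp 2 * exp 1) * (9 / ln (ln 3) + 2) ^ 2).
move=> m n n_ge3 lt_sqrt s nodup_s root_s.
have n_gt0 : (0 < n)%Z by lia.
have lt_m := abs_lt_sqr_of_sqrt_lt (Z.lt_le_incl _ _ n_gt0) lt_sqrt.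
set X := (2 * Z.to_nat n)%N; set F := (4 * Z.to_nat (n * n - m))%N.
have := count_counted_roots n_gt0 lt_m nodup_s root_s
  (trunc_log_ltn X (isT : (1 < 2)%N)) (ltn0Sn _) (lt_exp2_exp2_trunc_log F).
have N_ge3 : 3 <= IZR n by apply: IZR_le.
have X_eq : INR X = 2 * IZR n.
  by rewrite INR_muln (INR_IZR_INZ (Z.to_nat n)) Z2Nat.id; [simpl; lra | lia].
have F_le : INR F <= 2 ^ 3 * (IZR n * IZR n).
  rewrite INR_muln (INR_IZR_INZ (Z.to_nat _)) Z2Nat.id; last lia.
  have : IZR (n * n - m) <= 2 * IZR (n * n) by rewrite -mult_IZR; apply: IZR_le; lia.
  by rewrite mult_IZR; simpl; lra.
have F_gt0 : (0 < F)%N by rewrite /F; lia.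
have l_le := trunc_log2S_le_ln N_ge3 X_eq.
have J_le := trunc_log2S_iter_le_lnln N_ge3 F_gt0 F_le.
rewrite -/X X_eq => count; apply: Rle_trans count _.
have K_pos : 0 < 2 * exp 2 * exp 1 by have := exp_pos 1; have := exp_pos 2; nra.
have -> : 10 * (2 * exp 2 * exp 1) * (9 / ln (ln 3) + 2) ^ 2 * IZR n * ln (IZR n)
          * ln (ln (IZR n)) ^ 2
        = 5 * ln (IZR n) * (2 * IZR n)
          * (2 * exp 2 * exp 1 * ((9 / ln (ln 3) + 2) * ln (ln (IZR n))) ^ 2) by ring.
apply: Rmult_le_compat.
- by apply: Rmult_le_pos; [apply: pos_INR | lra].
- by apply: Rmult_le_pos; [lra | apply: pow_le; apply: pos_INR].
- by apply: Rmult_le_compat_r; lra.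
- by apply: Rmult_le_compat_l; [lra | apply: pow_incr; split; [apply: pos_INR | exact: J_le]].
Qed.
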